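(* Let $(x_n)$ be a bounded sequence and $(y_n)$ a weakly Cauchy sequence in a Banach space $X$. Then for every $\varepsilon\in(0,1)$ there is a subsequence $(n_k)$ with the following properties: - both $(x_{n_k})_k$ and $(x_{n_k}+y_{n_k})_k$ are $c_J$-stable; - $(1-\varepsilon)\,\tilde c_J(x_n)\le c_J(x_{n_k})\le\tilde c_J(x_n)$; - $c_J(x_{n_k}+y_{n_k})=c_J(x_{n_k})$.
   Context: For a bounded sequence $(x_n)$ in a Banach space, define $c_m=\inf\{\|\sum_{n\ge m}\alpha_n x_n\|: \sum_{n\ge m}|\alpha_n|=1\}$ and $c_J(x_n)=\sup_m c_m$. Passing to a subsequence does not decrease $c_J$. Define $\tilde c_J(x_n)=\sup\{c_J(x_{n_k}): (x_{n_k}) \text{ a subsequence of } (x_n)\}$. A sequence is called $c_J$-stable if $c_J(x_n)=\tilde c_J(x_n)$. *)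

From Stdlib Require Import Reals Lra.
Open Scope R_scope.

Set Implicit Arguments.

Record BanachSpace := {
  carrier :> Type;
  vadd : carrier -> carrier -> carrier;
  vscal : R -> carrier -> carrier;
  vzero : carrier;
  vopp : carrier -> carrier;
  vnorm : carrier -> R;
  vadd_assoc : forall x y z, vadd x (vadd y z) = vadd (vadd x y) z;
  vadd_comm : forall x y, vadd x y = vadd y x;
  vadd_0 : forall x, vadd x vzero = x;
  vadd_opp : forall x, vadd x (vopp x) = vzero;
  vscal_1 : forall x, vscal 1 x = x;
  vscal_assoc : forall a b x, vscal a (vscal b x) = vscal (a * b) x;
  vscal_distr_v : forall a x y, vscal a (vadd x y) = vadd (vscal a x) (vscal a y);
  vscal_distr_s : forall a b x, vscal (a + b) x = vadd (vscal a x) (vscal b x);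
  vnorm_nonneg : forall x, 0 <= vnorm x;
  vnorm_eq0 : forall x, vnorm x = 0 -> x = vzero;
  vnorm_scal : forall a x, vnorm (vscal a x) = Rabs a * vnorm x;
  vnorm_triangle : forall x y, vnorm (vadd x y) <= vnorm x + vnorm y;
  complete : forall u : nat -> carrier,
    (forall e, 0 < e -> exists N, forall n m, (N <= n)%nat -> (N <= m)%nat ->
        vnorm (vadd (u n) (vopp (u m))) < e) ->
    exists l, forall e, 0 < e -> exists N, forall n, (N <= n)%nat ->
        vnorm (vadd (u n) (vopp l)) < e
}.

Section Defs.
Context {X : BanachSpace}.

Definition bounded_linear_functional (f : X -> R) : Prop :=
  (forall x y, f (vadd X x y) = f x + f y) /\
  (forall a x, f (vscal X a x) = a * f x) /\
  (exists C, forall x, Rabs (f x) <= C * vnorm X x).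

Definition bounded_seq (x : nat -> X) : Prop :=
  exists M, forall n, vnorm X (x n) <= M.

Definition weakly_Cauchy (y : nat -> X) : Prop :=
  forall f, bounded_linear_functional f -> Cauchy_crit (fun n => f (y n)).

Definition seq_add (x y : nat -> X) : nat -> X := fun n => vadd X (x n) (y n).

Fixpoint vsum (a : nat -> R) (x : nat -> X) (m k : nat) : X :=
  match k with
  | O => vscal X (a m) (x m)
  | S k' => vadd X (vsum a x m k') (vscal X (a (m + S k')%nat) (x (m + S k')%nat))
  end.

(** The set { || sum_{n>=m} a_n x_n || : sum_{n>=m} |a_n| = 1 }
    (finitely supported coefficient sequences starting at m). *)
Definition cm_set (x : nat -> X) (m : nat) (r : R) : Prop :=
  exists (a : nat -> R) (k : nat),
    sum_f m (m + k) (fun n => Rabs (a n)) = 1 /\ r = vnorm X (vsum a x m k).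

Definition is_glb (E : R -> Prop) (g : R) : Prop :=
  (forall r, E r -> g <= r) /\ (forall b, (forall r, E r -> b <= r) -> b <= g).

Definition is_cm (x : nat -> X) (m : nat) (r : R) : Prop := is_glb (cm_set x m) r.

Definition is_cJ (x : nat -> X) (r : R) : Prop :=
  is_lub (fun c => exists m, is_cm x m c) r.

Definition strictly_increasing (phi : nat -> nat) : Prop :=
  forall n, (phi n < phi (S n))%nat.

Definition is_tilde_cJ (x : nat -> X) (r : R) : Prop :=
  is_lub (fun c => exists phi, strictly_increasing phi /\ is_cJ (fun k => x (phi k)) c) r.

Definition cJ_stable (x : nat -> X) : Prop :=
  exists r, is_cJ x r /\ is_tilde_cJ x r.

End Defs.

(* A weakly Cauchy perturbation does not change c_J: c_m(x + y) <= c_J(x) for every m. Combinations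
   sum a_n x_n with sum |a_n| = 1 and norm close to c_J(x) exist arbitrarily far out, and mixing two
   disjointly supported ones yields such blocks with sum a_n = 0. Applied to y, zero-sum blocks form a
   weakly null sequence, so by Mazur's lemma (Hahn-Banach under a sublinear gauge, via Zorn) some convex
   combination of them is small; the same convex combination of the blocks then competes for c_m(x + y).
   Applying this also to (x + y) + (-y) gives c_J(x + y) = c_J(x), for every subsequence as well.
   Passing to eventual subsequences can only increase c_J and decrease tilde c_J; refining so that the
   k-th c_J is within d/(k+1) of the previous tilde c_J and taking the diagonal gives a c_J-stable
   subsequence whose c_J is within d of tilde c_J(x). *)

From Stdlib Require Import Bool Reals Lra Lia Classical ClassicalEpsilon
  FunctionalExtensionality ProofIrrelevance.
From mathcomp Require classical_sets boolp.
Open Scope R_scope.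

Fixpoint fsum {T : Type} (add : T -> T -> T) (zero : T) (u : nat -> T) (K : nat) : T :=
  match K with O => zero | S K' => add (fsum add zero u K') (u K') end.

Record comm_monoid {T : Type} (add : T -> T -> T) (zero : T) : Prop := {
  monoid_addA : forall x y z, add x (add y z) = add (add x y) z;
  monoid_addC : forall x y, add x y = add y x;
  monoid_add0 : forall x, add x zero = x }.

Section FiniteSums.
Context {T : Type} {add : T -> T -> T} {zero : T}.
Notation sum := (fsum add zero).

Lemma fsum_ext u v K : (forall i, (i < K)%nat -> u i = v i) -> sum u K = sum v K.
Proof.
  induction K as [|K IH]; intros H; simpl; [reflexivity|].
  rewrite IH, H; [reflexivity | lia | intros; apply H; lia].
Qed.

Lemma fsum_hom {T' : Type} (add' : T' -> T' -> T') (zero' : T') (h : T -> T') :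
  (forall x y, h (add x y) = add' (h x) (h y)) -> h zero = zero' ->
  forall u K, h (sum u K) = fsum add' zero' (fun i => h (u i)) K.
Proof. intros hadd h0 u K; induction K; simpl; congruence. Qed.

Context (monoid : comm_monoid add zero).

Let addA := monoid_addA _ _ monoid.
Let addC := monoid_addC _ _ monoid.
Let add0 := monoid_add0 _ _ monoid.

Lemma fsum_zero u K : (forall i, (i < K)%nat -> u i = zero) -> sum u K = zero.
Proof.
  induction K as [|K IH]; intros H; simpl; [reflexivity|].
  rewrite IH, H; [apply add0 | lia | intros; apply H; lia].
Qed.

Lemma fsum_split u m L : sum u (m + L) = add (sum u m) (sum (fun i => u (m + i)%nat) L).
Proof.
  induction L as [|L IH]; simpl.
  - rewrite Nat.add_0_r, add0; reflexivity.
  - rewrite Nat.add_succ_r; simpl. rewrite IH, addA. reflexivity.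
Qed.

Lemma fsum_extend u K K' : (K <= K')%nat -> (forall i, (K <= i < K')%nat -> u i = zero) ->
  sum u K' = sum u K.
Proof.
  intros HK H. replace K' with (K + (K' - K))%nat by lia.
  rewrite fsum_split, (fsum_zero (fun i => u (K + i)%nat)); [apply add0|].
  intros; apply H; lia.
Qed.

Lemma fsum_shift u m L :
  sum (fun i => u (i + m)%nat) L = sum (fun j => if (m <=? j)%nat then u j else zero) (m + L).
Proof.
  rewrite fsum_split, (fsum_zero _ m).
  - rewrite addC, add0. apply fsum_ext. intros i _.
    replace (m <=? m + i)%nat with true by (symmetry; apply Nat.leb_le; lia).
    f_equal; lia.
  - intros i Hi. replace (m <=? i)%nat with false by (symmetry; apply Nat.leb_gt; lia). reflexivity.
Qed.

Lemma fsum_add u v K : sum (fun i => add (u i) (v i)) K = add (sum u K) (sum v K).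
Proof.
  induction K as [|K IH]; simpl; [now rewrite add0|].
  rewrite IH, <- !addA. f_equal.
  rewrite addA, (addC (sum v K) (u K)), <- addA. reflexivity.
Qed.

Lemma fsum_swap (u : nat -> nat -> T) K L :
  sum (fun i => sum (u i) L) K = sum (fun j => sum (fun i => u i j) K) L.
Proof.
  induction K as [|K IH]; simpl.
  - symmetry; apply fsum_zero; reflexivity.
  - rewrite IH, <- fsum_add. reflexivity.
Qed.

Lemma fsum_single u K i0 : (i0 < K)%nat -> (forall i, (i < K)%nat -> i <> i0 -> u i = zero) ->
  sum u K = u i0.
Proof.
  intros Hi H. rewrite (fsum_extend u (S i0) K) by (try lia; intros; apply H; lia).
  simpl. rewrite fsum_zero by (intros; apply H; lia). rewrite addC; apply add0.
Qed.

Lemma fsum_trunc u L K : (L <= K)%nat ->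
  sum (fun i => if (i <? L)%nat then u i else zero) K = sum u L.
Proof.
  intros HLK. rewrite (fsum_extend _ L K HLK).
  - apply fsum_ext. intros i Hi. apply Nat.ltb_lt in Hi. rewrite Hi. reflexivity.
  - intros i Hi. replace (i <? L)%nat with false by (symmetry; apply Nat.ltb_ge; lia). reflexivity.
Qed.

Lemma fsum_reindex (F : nat -> nat -> T) (th : nat -> nat) K M :
  (forall n, (n < K)%nat -> (forall k, F n k = zero) \/
     ((th n < M)%nat /\ forall k, k <> th n -> F n k = zero)) ->
  sum (fun k => sum (fun n => F n k) K) M = sum (fun n => F n (th n)) K.
Proof.
  intros HF. rewrite <- fsum_swap. apply fsum_ext. intros n Hn.
  destruct (HF n Hn) as [H0 | [Hlt H1]].
  - rewrite H0. apply fsum_zero. intros; apply H0.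
  - apply fsum_single; auto.
Qed.

End FiniteSums.

Notation rsum := (fsum Rplus 0).
Notation xsum X := (fsum (vadd X) (vzero X)).
Notation lincomb X a z K := (fsum (vadd X) (vzero X) (fun n => vscal X (a n) (z n)) K).

Lemma R_comm_monoid : comm_monoid Rplus 0.
Proof. split; intros; ring. Qed.

Lemma rsum_le u v K : (forall i, (i < K)%nat -> u i <= v i) -> rsum u K <= rsum v K.
Proof.
  induction K as [|K IH]; intros H; simpl; [lra|].
  pose proof (H K (Nat.lt_succ_diag_r K)). pose proof (IH ltac:(intros; apply H; lia)). lra.
Qed.

Lemma rsum_nonneg u K : (forall i, (i < K)%nat -> 0 <= u i) -> 0 <= rsum u K.
Proof.
  intros H. apply Rle_trans with (rsum (fun _ => 0) K).
  - right; symmetry; apply (fsum_zero R_comm_monoid); reflexivity.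
  - apply rsum_le, H.
Qed.

Lemma rsum_abs_le u K : Rabs (rsum u K) <= rsum (fun i => Rabs (u i)) K.
Proof.
  induction K as [|K IH]; simpl; [rewrite Rabs_R0; lra|].
  pose proof (Rabs_triang (rsum u K) (u K)). lra.
Qed.

Lemma rsum_scal c u K : c * rsum u K = rsum (fun i => c * u i) K.
Proof. apply (fsum_hom Rplus 0 (Rmult c)); intros; ring. Qed.

Lemma rsum_lin (u v : nat -> R) al be K :
  rsum (fun n => al * u n + be * v n) K = al * rsum u K + be * rsum v K.
Proof. rewrite (fsum_add R_comm_monoid), !rsum_scal. reflexivity. Qed.

Lemma rsum_sum_f f m k : sum_f m (m + k) f = rsum (fun i => f (i + m)%nat) (S k).
Proof.
  unfold sum_f. replace (m + k - m)%nat with k by lia.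
  induction k as [|k IH]; simpl; [lra|]. rewrite IH. reflexivity.
Qed.

Lemma rsum_abs_disjoint u K :
  (forall i j, (i < K)%nat -> (j < K)%nat -> i <> j -> u i = 0 \/ u j = 0) ->
  Rabs (rsum u K) = rsum (fun i => Rabs (u i)) K.
Proof.
  induction K as [|K IH]; intros H; simpl; [apply Rabs_R0|].
  destruct (Req_dec (u K) 0) as [E|E].
  - rewrite E, Rabs_R0, !Rplus_0_r. apply IH. intros; apply H; lia.
  - assert (Hz : forall i, (i < K)%nat -> u i = 0).
    { intros i Hi. destruct (H i K) as [|E']; [lia | lia | lia | assumption | contradiction]. }
    rewrite (fsum_zero R_comm_monoid u K Hz),
      (fsum_zero R_comm_monoid (fun i => Rabs (u i)) K) by (intros i Hi; rewrite Hz; auto using Rabs_R0).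
    rewrite !Rplus_0_l. reflexivity.
Qed.

Section VectorSpace.
Variable X : BanachSpace.

Lemma vadd_0l (x : X) : vadd X (vzero X) x = x.
Proof. rewrite vadd_comm; apply vadd_0. Qed.

Lemma vadd_cancel_l (a b c : X) : vadd X a b = vadd X a c -> b = c.
Proof.
  intros H. rewrite <- (vadd_0l b), <- (vadd_0l c), <- (vadd_opp X a), (vadd_comm X a).
  rewrite <- !vadd_assoc, H. reflexivity.
Qed.

Lemma vscal_0l (x : X) : vscal X 0 x = vzero X.
Proof.
  apply (vadd_cancel_l (vscal X 0 x)). rewrite vadd_0, <- vscal_distr_s, Rplus_0_l. reflexivity.
Qed.

Lemma vscal_0r (a : R) : vscal X a (vzero X) = vzero X.
Proof.
  apply (vadd_cancel_l (vscal X a (vzero X))). rewrite vadd_0, <- vscal_distr_v, vadd_0. reflexivity.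
Qed.

Lemma vopp_vscal (x : X) : vopp X x = vscal X (-1) x.
Proof.
  apply (vadd_cancel_l x). rewrite vadd_opp. rewrite <- (vscal_1 X x) at 1.
  rewrite <- vscal_distr_s, Rplus_opp_r. symmetry; apply vscal_0l.
Qed.

Lemma vadd_opp_l (x : X) : vadd X (vopp X x) x = vzero X.
Proof. rewrite vadd_comm; apply vadd_opp. Qed.

Lemma vadd_addKr (x y : X) : vadd X (vadd X x y) (vopp X y) = x.
Proof. rewrite <- vadd_assoc, vadd_opp, vadd_0. reflexivity. Qed.

Lemma vadd_ACA (a b c d : X) : vadd X (vadd X a b) (vadd X c d) = vadd X (vadd X a c) (vadd X b d).
Proof.
  rewrite <- !vadd_assoc. f_equal. rewrite !vadd_assoc. f_equal. apply vadd_comm.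
Qed.

Lemma vnorm_zero : vnorm X (vzero X) = 0.
Proof. rewrite <- (vscal_0l (vzero X)), vnorm_scal, Rabs_R0; ring. Qed.

Lemma vnorm_opp (x : X) : vnorm X (vopp X x) = vnorm X x.
Proof. rewrite vopp_vscal, vnorm_scal, Rabs_left by lra; ring. Qed.

Lemma vnorm_add_ge (x y : X) : vnorm X y - vnorm X x <= vnorm X (vadd X x y).
Proof.
  pose proof (vnorm_triangle X (vopp X x) (vadd X x y)) as H.
  rewrite vadd_assoc, vadd_opp_l, vadd_0l, vnorm_opp in H. lra.
Qed.

Lemma vnorm_combination_lt (u v : X) al be B : Rabs al + Rabs be = 1 -> be <> 0 ->
  vnorm X u <= B -> vnorm X v < B -> vnorm X (vadd X (vscal X al u) (vscal X be v)) < B.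
Proof.
  intros H1 Hbe Hu Hv. eapply Rle_lt_trans; [apply vnorm_triangle |]. rewrite !vnorm_scal.
  pose proof (Rabs_pos al). pose proof (Rabs_pos_lt be Hbe).
  apply Rle_lt_trans with (Rabs al * B + Rabs be * vnorm X v);
    [apply Rplus_le_compat_r, Rmult_le_compat_l; lra |].
  apply Rlt_le_trans with (Rabs al * B + Rabs be * B); [apply Rplus_lt_compat_l, Rmult_lt_compat_l; lra |].
  right. rewrite <- Rmult_plus_distr_r, H1. ring.
Qed.

Lemma X_comm_monoid : comm_monoid (vadd X) (vzero X).
Proof. split; [apply vadd_assoc | apply vadd_comm | apply vadd_0]. Qed.

Lemma xsum_scal c u K : vscal X c (xsum X u K) = xsum X (fun i => vscal X c (u i)) K.
Proof. apply fsum_hom; [intros; apply vscal_distr_v | apply vscal_0r]. Qed.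

Lemma xsum_scal_rsum a v K : vscal X (rsum a K) v = xsum X (fun i => vscal X (a i) v) K.
Proof. apply (fsum_hom _ _ (fun c => vscal X c v)); [intros; apply vscal_distr_s | apply vscal_0l]. Qed.

Lemma lincomb_lin (u v : nat -> R) (z : nat -> X) al be K :
  lincomb X (fun n => al * u n + be * v n) z K =
  vadd X (vscal X al (lincomb X u z K)) (vscal X be (lincomb X v z K)).
Proof.
  rewrite !xsum_scal, <- (fsum_add X_comm_monoid). apply fsum_ext. intros i _.
  rewrite vscal_distr_s, !vscal_assoc. reflexivity.
Qed.

Lemma lincomb_seq_add a (w y : nat -> X) K :
  lincomb X a (seq_add w y) K = vadd X (lincomb X a w K) (lincomb X a y K).
Proof.
  rewrite <- (fsum_add X_comm_monoid). apply fsum_ext. intros n _. apply vscal_distr_v.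
Qed.

Lemma xsum_norm_le u K : vnorm X (xsum X u K) <= rsum (fun i => vnorm X (u i)) K.
Proof.
  induction K as [|K IH]; simpl; [rewrite vnorm_zero; lra|].
  pose proof (vnorm_triangle X (xsum X u K) (u K)). lra.
Qed.

Lemma blf_opp f : bounded_linear_functional f -> forall x, f (vopp X x) = - f x.
Proof. intros [_ [Hs _]] x. rewrite vopp_vscal, Hs. ring. Qed.

Lemma blf_xsum f : bounded_linear_functional f ->
  forall u K, f (xsum X u K) = rsum (fun i => f (u i)) K.
Proof.
  intros [Ha [Hs _]] u K. apply fsum_hom; [exact Ha|].
  rewrite <- (vscal_0l (vzero X)), Hs. ring.
Qed.

End VectorSpace.

Lemma glb_exists (E : R -> Prop) :
  (exists r, E r) -> (exists b, forall r, E r -> b <= r) -> exists g, is_glb E g.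
Proof.
  intros [r0 Hr0] [b Hb].
  destruct (completeness (fun y => E (- y))) as [m [Hm1 Hm2]].
  - exists (- b). intros y Hy. specialize (Hb _ Hy). lra.
  - exists (- r0). rewrite Ropp_involutive. exact Hr0.
  - exists (- m). split.
    + intros r Hr. assert (- r <= m) by (apply Hm1; rewrite Ropp_involutive; exact Hr). lra.
    + intros c Hc. assert (m <= - c) by (apply Hm2; intros y Hy; specialize (Hc _ Hy); lra). lra.
Qed.

Lemma pointwise_glb_exists {A : Type} (E : A -> R -> Prop) :
  (forall x, exists r, E x r) -> (forall x, exists b, forall r, E x r -> b <= r) ->
  exists u : A -> R, forall x, is_glb (E x) (u x).
Proof.
  intros Hne Hbd. apply (choice (fun x g => is_glb (E x) g)).
  intros x. exact (glb_exists (E x) (Hne x) (Hbd x)).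
Qed.

Lemma glb_scale (E1 E2 : R -> Prop) g1 g2 a : 0 < a -> is_glb E1 g1 -> is_glb E2 g2 ->
  (forall r, E2 r <-> E1 (r / a)) -> g2 = a * g1.
Proof.
  intros Ha [H1l H1g] [H2l H2g] HE. apply Rle_antisym.
  - assert (Hg1 : g2 / a <= g1).
    { apply H1g. intros r Hr.
      assert (Har : E2 (a * r)) by (apply HE; replace (a * r / a) with r by (field; lra); exact Hr).
      pose proof (H2l _ Har). apply (Rmult_le_reg_l a); [exact Ha|]. field_simplify; lra. }
    apply (Rmult_le_compat_l a) in Hg1; [|lra]. field_simplify in Hg1; lra.
  - apply H2g. intros r Hr. pose proof (H1l _ (proj1 (HE r) Hr)) as Hr'.
    apply (Rmult_le_compat_l a) in Hr'; [|lra]. field_simplify in Hr'; lra.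
Qed.

Lemma Zorn_prop (T : Type) (le : T -> T -> Prop) :
  (forall x, le x x) -> (forall x y z, le x y -> le y z -> le x z) ->
  (forall x y, le x y -> le y x -> x = y) ->
  (forall A : T -> Prop, (forall s t, A s -> A t -> le s t \/ le t s) ->
     exists u, forall s, A s -> le s u) ->
  exists m, forall s, le m s -> s = m.
Proof.
  intros Hrefl Htrans Hanti Hchain.
  (* MathComp's [Zorn] expects a boolean relation. *)
  assert (Hle : forall x y, le x y <-> boolp.asbool (le x y) = true)
    by (intros; split; [apply boolp.asboolT | apply boolp.asboolW]).
  destruct (@classical_sets.Zorn T (fun x y => boolp.asbool (le x y))) as [m Hm].
  - intros x. apply Hle, Hrefl.
  - intros x y z Hxy Hyz. apply Hle. apply Htrans with y; apply Hle; assumption.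
  - intros x y Hxy Hyx. apply Hanti; apply Hle; assumption.
  - intros A HA. destruct (Hchain A) as [u Hu].
    + intros s t As At. destruct (HA s t As At); [left | right]; apply Hle; assumption.
    + exists u. intros s As. apply Hle, Hu, As.
  - exists m. intros s Hs. apply Hm, Hle, Hs.
Qed.

Section HahnBanach.
Variable X : BanachSpace.

Definition sublinear (q : X -> R) : Prop :=
  (forall x y, q (vadd X x y) <= q x + q y) /\
  (forall a x, 0 < a -> q (vscal X a x) = a * q x).

Lemma sublinear_zero q : sublinear q -> q (vzero X) = 0.
Proof. intros [_ H]. pose proof (H 2 (vzero X) ltac:(lra)) as H2. rewrite vscal_0r in H2. lra. Qed.

Lemma sublinear_scal q t x : sublinear q -> 0 <= t -> q (vscal X t x) = t * q x.
Proof.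
  intros Hq Ht. destruct (Req_dec t 0) as [->|Ht0].
  - rewrite vscal_0l, sublinear_zero by exact Hq. ring.
  - apply (proj2 Hq); lra.
Qed.

Lemma sublinear_opp_le q x : sublinear q -> - q (vopp X x) <= q x.
Proof.
  intros Hq. pose proof (proj1 Hq x (vopp X x)) as H.
  rewrite vadd_opp, sublinear_zero in H by exact Hq. lra.
Qed.

Lemma glb_sublinear (E : X -> R -> Prop) (u : X -> R) :
  (forall x, is_glb (E x) (u x)) ->
  (forall x y r1 r2, E x r1 -> E y r2 -> exists r, E (vadd X x y) r /\ r <= r1 + r2) ->
  (forall a x r, 0 < a -> E (vscal X a x) r <-> E x (r / a)) ->
  sublinear u.
Proof.
  intros Hu Hadd Hscal. split.
  - intros x y.
    assert (Hy : forall r2, E y r2 -> u (vadd X x y) - r2 <= u x).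
    { intros r2 Hr2. apply (proj2 (Hu x)). intros r1 Hr1.
      destruct (Hadd x y r1 r2 Hr1 Hr2) as [r [Hr Hle]].
      pose proof (proj1 (Hu _) r Hr). lra. }
    assert (u (vadd X x y) - u x <= u y).
    { apply (proj2 (Hu y)). intros r2 Hr2. specialize (Hy r2 Hr2). lra. }
    lra.
  - intros a x Ha. apply (glb_scale (E x) (E (vscal X a x))); auto.
Qed.

Lemma chain_inf_sublinear (F : (X -> R) -> Prop) (p : X -> R) :
  F p -> (forall q, F q -> sublinear q) -> (forall q x, F q -> q x <= p x) ->
  (forall q1 q2, F q1 -> F q2 -> (forall x, q1 x <= q2 x) \/ (forall x, q2 x <= q1 x)) ->
  exists u, sublinear u /\ forall q x, F q -> u x <= q x.
Proof.
  intros Fp Hsub Hp Hchain.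
  pose (E := fun x r => exists q, F q /\ r = q x).
  destruct (pointwise_glb_exists E) as [u Hu].
  - intros x. exists (p x), p. split; [exact Fp | reflexivity].
  - intros x. exists (- p (vopp X x)). intros r [q [Fq ->]].
    pose proof (sublinear_opp_le q x (Hsub q Fq)). pose proof (Hp q (vopp X x) Fq). lra.
  - exists u. split.
    + apply (glb_sublinear E u Hu).
      * intros x y r1 r2 [q1 [F1 ->]] [q2 [F2 ->]].
        assert (Hmin : exists q, F q /\ q x <= q1 x /\ q y <= q2 y).
        { destruct (Hchain q1 q2 F1 F2) as [Hle | Hle];
            [exists q1 | exists q2]; repeat split; auto using Rle_refl. }
        destruct Hmin as [q [Fq [Hx Hy]]].
        exists (q (vadd X x y)). split; [exists q; split; auto |].
        pose proof (proj1 (Hsub q Fq) x y). lra.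
      * intros a x r Ha. split; intros [q [Fq Hr]]; exists q; split; auto.
        -- rewrite Hr, (proj2 (Hsub q Fq)) by exact Ha. field. lra.
        -- rewrite (proj2 (Hsub q Fq)) by exact Ha. rewrite <- Hr. field. lra.
    + intros q x Fq. apply (proj1 (Hu x)). exists q. split; auto.
Qed.

Lemma minimal_sublinear_odd (q : X -> R) : sublinear q ->
  (forall q', sublinear q' -> (forall x, q' x <= q x) -> forall x, q' x = q x) ->
  forall z, q (vopp X z) = - q z.
Proof.
  intros Hq Hmin z.
  (* [u x = inf_(t >= 0) q (x + t z) - t q z] is sublinear and below [q], hence equal to [q];
     [t = 1] at [- z] then gives [q (- z) <= - q z]. *)
  pose (E := fun x r => exists t, 0 <= t /\ r = q (vadd X x (vscal X t z)) - t * q z).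
  destruct (pointwise_glb_exists E) as [u Hu].
  - intros x. exists (q (vadd X x (vscal X 0 z)) - 0 * q z), 0. split; [lra | reflexivity].
  - intros x. exists (- q (vopp X x)). intros r [t [Ht ->]].
    pose proof (proj1 Hq (vadd X x (vscal X t z)) (vopp X x)) as H.
    replace (vadd X (vadd X x (vscal X t z)) (vopp X x)) with (vscal X t z) in H
      by (rewrite (vadd_comm X x), vadd_addKr; reflexivity).
    rewrite sublinear_scal in H by assumption. lra.
  - assert (Hsub : sublinear u).
    { apply (glb_sublinear E u Hu).
      - intros x y r1 r2 [t [Ht ->]] [t' [Ht' ->]].
        exists (q (vadd X (vadd X x y) (vscal X (t + t') z)) - (t + t') * q z). split.
        + exists (t + t'). split; [lra | reflexivity].
        + rewrite vscal_distr_s, <- vadd_ACA.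
          pose proof (proj1 Hq (vadd X x (vscal X t z)) (vadd X y (vscal X t' z))). lra.
      - intros a x r Ha.
        assert (Hrw : forall t, vadd X (vscal X a x) (vscal X t z) = vscal X a (vadd X x (vscal X (t / a) z))).
        { intros t. rewrite vscal_distr_v, vscal_assoc. do 3 f_equal. field. lra. }
        split; intros [t [Ht Hr]].
        + exists (t / a). split; [apply Rmult_le_pos; [lra | apply Rlt_le, Rinv_0_lt_compat; lra] |].
          rewrite Hr, Hrw, (proj2 Hq) by exact Ha. field. lra.
        + exists (a * t). split; [apply Rmult_le_pos; lra |].
          rewrite Hrw, (proj2 Hq) by exact Ha.
          replace (a * t / a) with t by (field; lra).
          replace r with (a * (r / a)) by (field; lra). rewrite Hr. ring. }
    assert (Huq : forall x, u x <= q x).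
    { intros x. apply (proj1 (Hu x)). exists 0. split; [lra|].
      rewrite vscal_0l, vadd_0. ring. }
    pose proof (sublinear_opp_le q z Hq).
    assert (q (vopp X z) <= - q z).
    { rewrite <- (Hmin u Hsub Huq). apply (proj1 (Hu _)). exists 1. split; [lra|].
      rewrite vscal_1, vadd_opp_l, sublinear_zero by exact Hq. ring. }
    lra.
Qed.

Variable p : X -> R.
Hypothesis p_sublinear : sublinear p.

Lemma exists_minimal_sublinear_below : exists q, sublinear q /\ (forall x, q x <= p x) /\
  forall q', sublinear q' -> (forall x, q' x <= q x) -> forall x, q' x = q x.
Proof.
  pose (D := { q : X -> R | sublinear q /\ forall x, q x <= p x }).
  destruct (Zorn_prop D (fun a b => forall x, proj1_sig b x <= proj1_sig a x)) as [[q [Hq Hqp]] Hmin].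
  - intros a x. lra.
  - intros a b c Hab Hbc x. specialize (Hab x). specialize (Hbc x). lra.
  - intros [qa Ha] [qb Hb] Hab Hba. simpl in *.
    assert (qa = qb) by (apply functional_extensionality; intros x; specialize (Hab x); specialize (Hba x); lra).
    subst. f_equal. apply proof_irrelevance.
  - intros A HA.
    destruct (chain_inf_sublinear (fun q => q = p \/ exists a, A a /\ q = proj1_sig a) p)
      as [u [Hu Hule]].
    + left; reflexivity.
    + intros q [-> | [[a Ha] [_ ->]]]; [exact p_sublinear | apply Ha].
    + intros q x [-> | [[a Ha] [_ ->]]]; [lra | apply Ha].
    + intros q1 q2 [-> | [a1 [A1 ->]]] [-> | [a2 [A2 ->]]].
      * left; intros; lra.
      * right; intros; apply (proj2_sig a2).
      * left; intros; apply (proj2_sig a1).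
      * destruct (HA a1 a2 A1 A2); [right | left]; assumption.
    + exists (exist _ u (conj Hu (fun x => Hule p x (or_introl eq_refl)))).
      intros a Aa x. simpl. apply Hule. right. exists a. split; auto.
  - exists q. split; [exact Hq | split; [exact Hqp |]].
    intros q' Hq' Hle.
    assert (Hq'p : forall x, q' x <= p x) by (intros x; apply Rle_trans with (q x); auto).
    specialize (Hmin (exist _ q' (conj Hq' Hq'p)) Hle).
    injection Hmin as ->. reflexivity.
Qed.

Theorem exists_linear_le_sublinear : exists f : X -> R,
  (forall x y, f (vadd X x y) = f x + f y) /\ (forall a x, f (vscal X a x) = a * f x) /\
  (forall x, f x <= p x).
Proof.
  destruct exists_minimal_sublinear_below as [q [Hq [Hqp Hmin]]].
  pose proof (minimal_sublinear_odd q Hq Hmin) as Hodd.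
  exists q. split; [| split; [| exact Hqp]].
  - intros x y. apply Rle_antisym; [apply (proj1 Hq) |].
    pose proof (proj1 Hq (vadd X x y) (vopp X y)) as H.
    rewrite vadd_addKr, Hodd in H. lra.
  - intros a x. destruct (Rtotal_order a 0) as [Ha | [-> | Ha]].
    + replace (vscal X a x) with (vopp X (vscal X (- a) x))
        by (rewrite vopp_vscal, vscal_assoc; f_equal; ring).
      rewrite Hodd, (proj2 Hq) by lra. ring.
    + rewrite vscal_0l, sublinear_zero by exact Hq. ring.
    + apply (proj2 Hq), Ha.
Qed.

End HahnBanach.

Section Separation.
Variable X : BanachSpace.

Definition weakly_null (G : nat -> X) : Prop :=
  forall f, bounded_linear_functional f -> forall eps, 0 < eps ->
    exists I, forall i, (I <= i)%nat -> Rabs (f (G i)) <= eps.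

Lemma lincomb_trunc (mu : nat -> R) (G : nat -> X) L K : (L <= K)%nat ->
  lincomb X (fun i => if (i <? L)%nat then mu i else 0) G K = lincomb X mu G L.
Proof.
  intros HLK. rewrite <- (fsum_trunc (X_comm_monoid X) _ L K HLK).
  apply fsum_ext. intros i _. destruct (i <? L)%nat; [reflexivity | apply vscal_0l].
Qed.

Definition cone_gauge_set (G : nat -> X) (d : R) (z : X) (r : R) : Prop :=
  exists mu L, (forall i, 0 <= mu i) /\ r = vnorm X (vadd X z (lincomb X mu G L)) - d * rsum mu L.

Lemma cone_gauge_sublinear (G : nat -> X) d (p : X -> R) :
  (forall z, is_glb (cone_gauge_set G d z) (p z)) -> sublinear X p.
Proof.
  intros Hp. apply (glb_sublinear X _ p Hp).
  - intros x y r1 r2 [mu1 [L1 [H1 ->]]] [mu2 [L2 [H2 ->]]].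
    pose (mu := fun i => (if (i <? L1)%nat then mu1 i else 0) + (if (i <? L2)%nat then mu2 i else 0)).
    exists (vnorm X (vadd X (vadd X x y) (lincomb X mu G (L1 + L2))) - d * rsum mu (L1 + L2)).
    split.
    + exists mu, (L1 + L2)%nat. split; [| reflexivity].
      intros i. unfold mu. specialize (H1 i). specialize (H2 i).
      destruct (i <? L1)%nat, (i <? L2)%nat; lra.
    + unfold mu. rewrite (fsum_add R_comm_monoid), !(fsum_trunc R_comm_monoid) by lia.
      erewrite fsum_ext by (intros i _; apply vscal_distr_s).
      rewrite (fsum_add (X_comm_monoid X)), !lincomb_trunc by lia. rewrite vadd_ACA.
      pose proof (vnorm_triangle X (vadd X x (lincomb X mu1 G L1)) (vadd X y (lincomb X mu2 G L2))).
      lra.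
  - intros a x r Ha.
    assert (Hrw : forall mu L, vadd X (vscal X a x) (lincomb X mu G L) =
                               vscal X a (vadd X x (lincomb X (fun i => mu i / a) G L))).
    { intros mu L. rewrite vscal_distr_v, xsum_scal. f_equal. apply fsum_ext. intros i _.
      rewrite vscal_assoc. f_equal. field. lra. }
    assert (Hrs : forall mu L, rsum (fun i => mu i / a) L = / a * rsum mu L).
    { intros mu L. rewrite rsum_scal. apply fsum_ext. intros; unfold Rdiv; ring. }
    split; intros [mu [L [Hmu Hr]]].
    + exists (fun i => mu i / a), L. split.
      * intros i. specialize (Hmu i). apply Rmult_le_pos; [lra | apply Rlt_le, Rinv_0_lt_compat; lra].
      * rewrite Hr, Hrw, vnorm_scal, Rabs_pos_eq, Hrs by lra. field. lra.
    + exists (fun i => a * mu i), L. split.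
      * intros i. specialize (Hmu i). apply Rmult_le_pos; lra.
      * rewrite Hrw, vnorm_scal, Rabs_pos_eq, <- rsum_scal by lra.
        replace (lincomb X (fun i => a * mu i / a) G L) with (lincomb X mu G L)
          by (apply fsum_ext; intros; f_equal; field; lra).
        replace r with (a * (r / a)) by (field; lra). rewrite Hr. ring.
Qed.

Lemma exists_functional_ge_of_l1_lower_estimate (G : nat -> X) (d : R) : 0 < d ->
  (forall mu L, (forall i, 0 <= mu i) -> d * rsum mu L <= vnorm X (lincomb X mu G L)) ->
  exists f, bounded_linear_functional f /\ forall i, d <= f (G i).
Proof.
  intros Hd HG.
  destruct (pointwise_glb_exists (cone_gauge_set G d)) as [p Hp].
  - intros z. exists (vnorm X (vadd X z (lincomb X (fun _ => 0) G 0)) - d * rsum (fun _ => 0) 0%nat),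
      (fun _ => 0), 0%nat. split; [intros; lra | reflexivity].
  - intros z. exists (- vnorm X z). intros r [mu [L [Hmu ->]]].
    pose proof (HG mu L Hmu). pose proof (vnorm_add_ge X z (lincomb X mu G L)). lra.
  - destruct (exists_linear_le_sublinear X p (cone_gauge_sublinear G d p Hp)) as [f [Hfadd [Hfscal Hfp]]].
    assert (Hpn : forall x, p x <= vnorm X x).
    { intros x. apply (proj1 (Hp x)). exists (fun _ => 0), 0%nat. split; [intros; lra|].
      simpl. rewrite vadd_0. ring. }
    assert (Hfopp : forall x, f (vopp X x) = - f x) by (intros x; rewrite vopp_vscal, Hfscal; ring).
    exists f. split; [split; [exact Hfadd | split; [exact Hfscal |]] |].
    + exists 1. intros x. apply Rabs_le. pose proof (Hfp x). pose proof (Hpn x).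
      pose proof (Hfp (vopp X x)). pose proof (Hpn (vopp X x)). rewrite Hfopp, vnorm_opp in *. lra.
    + intros i. pose proof (Hfp (vopp X (G i))) as Hi. rewrite Hfopp in Hi.
      assert (p (vopp X (G i)) <= - d).
      { pose (delta := fun j => if (j =? i)%nat then 1 else 0).
        assert (Hdelta : forall j, (j < S i)%nat -> j <> i -> delta j = 0).
        { intros j _ Hj. unfold delta. apply Nat.eqb_neq in Hj. rewrite Hj. reflexivity. }
        apply Rle_trans with (vnorm X (vadd X (vopp X (G i)) (lincomb X delta G (S i))) - d * rsum delta (S i)).
        - apply (proj1 (Hp _)). exists delta, (S i). split; [| reflexivity].
          intros j. unfold delta. destruct (j =? i)%nat; lra.
        - rewrite (fsum_single R_comm_monoid delta (S i) i), (fsum_single (X_comm_monoid X) _ (S i) i)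
            by (lia || (intros j Hj Hji; rewrite Hdelta by assumption; try apply vscal_0l; reflexivity)).
          unfold delta. rewrite Nat.eqb_refl, vscal_1, vadd_opp_l, vnorm_zero. lra. }
      lra.
Qed.

Lemma weakly_null_small_convex_combination (G : nat -> X) (d : R) : 0 < d -> weakly_null G ->
  exists mu L, (forall i, 0 <= mu i) /\ rsum mu L = 1 /\ vnorm X (lincomb X mu G L) <= d.
Proof.
  intros Hd HG. apply NNPP. intros Hno.
  destruct (exists_functional_ge_of_l1_lower_estimate G d Hd) as [f [Hf Hfd]].
  - intros mu L Hmu. destruct (Req_dec (rsum mu L) 0) as [E|E].
    + rewrite E, Rmult_0_r. apply vnorm_nonneg.
    + assert (Ht : 0 < rsum mu L) by (pose proof (rsum_nonneg mu L (fun i _ => Hmu i)); lra).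
      set (t := rsum mu L) in *.
      assert (Hnorm : lincomb X mu G L = vscal X t (lincomb X (fun i => mu i / t) G L)).
      { rewrite xsum_scal. apply fsum_ext. intros i _. rewrite vscal_assoc. f_equal. field. lra. }
      assert (d < vnorm X (lincomb X (fun i => mu i / t) G L)).
      { apply Rnot_le_lt. intros Hle. apply Hno. exists (fun i => mu i / t), L. split; [| split; [| exact Hle]].
        - intros i. specialize (Hmu i). apply Rmult_le_pos; [lra | apply Rlt_le, Rinv_0_lt_compat; lra].
        - replace (rsum (fun i => mu i / t) L) with (/ t * t); [field; lra |].
          unfold t. rewrite rsum_scal. apply fsum_ext. intros; unfold Rdiv; ring. }
      rewrite Hnorm, vnorm_scal, Rabs_pos_eq, Rmult_comm by lra.
      apply Rmult_le_compat_l; lra.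
  - destruct (HG f Hf (d / 2) ltac:(lra)) as [I HI].
    pose proof (HI I (le_n _)). pose proof (Hfd I). pose proof (Rle_abs (f (G I))). lra.
Qed.

End Separation.

Definition increasing_from (j : nat) (th : nat -> nat) : Prop :=
  forall n, (j <= n)%nat -> (th n < th (S n))%nat.

Lemma increasing_from_lt th j n1 n2 : increasing_from j th -> (j <= n1)%nat -> (n1 < n2)%nat ->
  (th n1 < th n2)%nat.
Proof.
  intros H H1 H2. induction H2 as [|n2 H2 IH]; [apply H; exact H1|].
  specialize (H n2 ltac:(lia)). lia.
Qed.

Lemma increasing_from_add th j i : increasing_from j th -> (th j + i <= th (j + i))%nat.
Proof.
  intros H. induction i as [|i IH]; [rewrite !Nat.add_0_r; lia|].
  specialize (H (j + i)%nat ltac:(lia)). replace (j + S i)%nat with (S (j + i)) by lia. lia.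
Qed.

Lemma strictly_increasing_from th : strictly_increasing th <-> increasing_from 0 th.
Proof. split; intros H n; [intros _ |]; apply H; lia. Qed.

Lemma strictly_increasing_ge th : strictly_increasing th -> forall n, (n <= th n)%nat.
Proof.
  intros H n. pose proof (increasing_from_add th 0 n (proj1 (strictly_increasing_from th) H)).
  simpl in *. lia.
Qed.

Lemma strictly_increasing_comp th psi : strictly_increasing th -> strictly_increasing psi ->
  strictly_increasing (fun n => th (psi n)).
Proof.
  intros Hth Hpsi n. apply (increasing_from_lt th 0); [apply strictly_increasing_from, Hth | lia | apply Hpsi].
Qed.

Definition supported_in (a : nat -> R) (N K : nat) : Prop := forall n, a n <> 0 -> (N <= n < K)%nat.

Lemma supported_in_zero a N K n : supported_in a N K -> ~ (N <= n < K)%nat -> a n = 0.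
Proof. intros H Hn. apply NNPP. intros Ha. exact (Hn (H n Ha)). Qed.

Lemma fsum_supported_extend {T : Type} {add : T -> T -> T} {zero : T} (monoid : comm_monoid add zero)
  (g : nat -> R -> T) a N K K' : (forall n, g n 0 = zero) -> supported_in a N K -> (K <= K')%nat ->
  fsum add zero (fun n => g n (a n)) K' = fsum add zero (fun n => g n (a n)) K.
Proof.
  intros Hg Ha HK. apply (fsum_extend monoid); [exact HK|].
  intros n Hn. rewrite (supported_in_zero a N K n Ha) by lia. apply Hg.
Qed.

Lemma supported_in_lt a N K : supported_in a N K -> rsum (fun n => Rabs (a n)) K = 1 -> (N < K)%nat.
Proof.
  intros Ha H1. destruct (Nat.lt_ge_cases N K) as [|HK]; [assumption|].
  rewrite (fsum_zero R_comm_monoid) in H1; [lra|].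
  intros n _. rewrite (supported_in_zero a N K n Ha) by lia. apply Rabs_R0.
Qed.

Lemma rsum_neq0 u K : rsum u K <> 0 -> exists n, (n < K)%nat /\ u n <> 0.
Proof.
  intros H. apply NNPP. intros Hno. apply H, (fsum_zero R_comm_monoid).
  intros n Hn. apply NNPP. intros Hu. exact (Hno (ex_intro _ n (conj Hn Hu))).
Qed.

Definition hits (th : nat -> nat) (m n k : nat) : bool := ((m <=? n) && (th n =? k))%nat.

Lemma hits_true th m n k : hits th m n k = true <-> (m <= n)%nat /\ th n = k.
Proof. unfold hits. rewrite andb_true_iff, Nat.leb_le, Nat.eqb_eq. reflexivity. Qed.

Lemma hits_false th m n k : ~ ((m <= n)%nat /\ th n = k) -> hits th m n k = false.
Proof. intros H. apply not_true_iff_false. rewrite hits_true. exact H. Qed.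

Definition pushforward (th : nat -> nat) (m K : nat) (a : nat -> R) (k : nat) : R :=
  rsum (fun n => if hits th m n k then a n else 0) K.

Section Pushforward.
Variables (th : nat -> nat) (a : nat -> R) (j m K : nat).
Hypothesis th_incr : increasing_from j th.
Hypothesis jm : (j <= m)%nat.
Hypothesis a_supp : supported_in a m K.

Lemma fsum_pushforward {T : Type} {add : T -> T -> T} {zero : T} (monoid : comm_monoid add zero)
  (g : nat -> R -> T) : (forall k, g k 0 = zero) ->
  fsum add zero (fun k => fsum add zero (fun n => g k (if hits th m n k then a n else 0)) K) (th K)
  = fsum add zero (fun n => g (th n) (a n)) K.
Proof.
  intros Hg. rewrite (fsum_reindex monoid (fun n k => g k (if hits th m n k then a n else 0)) th).
  - apply fsum_ext. intros n _. destruct (Compare_dec.le_lt_dec m n) as [Hmn | Hnm].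
    + replace (hits th m n (th n)) with true by (symmetry; apply hits_true; auto). reflexivity.
    + rewrite hits_false, (supported_in_zero a m K n a_supp) by lia. reflexivity.
  - intros n Hn. destruct (Compare_dec.le_lt_dec m n) as [Hmn | Hnm].
    + right. split; [apply (increasing_from_lt th j); [exact th_incr | lia | exact Hn] |].
      intros k Hk. rewrite hits_false; [apply Hg | intuition].
    + left. intros k. rewrite hits_false; [apply Hg | lia].
Qed.

Lemma pushforward_supported : supported_in (pushforward th m K a) (th m) (th K).
Proof.
  intros k Hk. destruct (rsum_neq0 _ _ Hk) as [n [Hn Hbn]].
  destruct (hits th m n k) eqn:E; [| lra]. apply hits_true in E as [Hmn <-].
  pose proof (a_supp n Hbn).
  split; [| apply (increasing_from_lt th j); [exact th_incr | lia | lia]].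
  destruct (Nat.eq_dec m n) as [-> | Hne]; [lia |].
  pose proof (increasing_from_lt th j m n th_incr jm ltac:(lia)). lia.
Qed.

Lemma pushforward_abs_sum :
  rsum (fun k => Rabs (pushforward th m K a k)) (th K) = rsum (fun n => Rabs (a n)) K.
Proof.
  rewrite <- (fsum_pushforward R_comm_monoid (fun _ c => Rabs c)) by (intros; apply Rabs_R0).
  apply fsum_ext. intros k _. apply rsum_abs_disjoint.
  intros n n' _ _ Hnn'. destruct (hits th m n k) eqn:E; [| left; reflexivity].
  destruct (hits th m n' k) eqn:E'; [| right; reflexivity].
  apply hits_true in E as [Hn <-]. apply hits_true in E' as [Hn' Eth]. exfalso.
  destruct (Nat.lt_total n n') as [Hl | [Hl | Hl]]; [| exact (Hnn' Hl) |];
    [pose proof (increasing_from_lt th j n n' th_incr ltac:(lia) Hl)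
    | pose proof (increasing_from_lt th j n' n th_incr ltac:(lia) Hl)]; lia.
Qed.

End Pushforward.

Section CmSets.
Variable X : BanachSpace.

Definition cm_set_supp (z : nat -> X) (m : nat) (r : R) : Prop :=
  exists a K, supported_in a m K /\ rsum (fun n => Rabs (a n)) K = 1 /\ r = vnorm X (lincomb X a z K).

Lemma vsum_lincomb a (x : nat -> X) m k :
  vsum a x m k = lincomb X (fun i => a (i + m)%nat) (fun i => x (i + m)%nat) (S k).
Proof.
  induction k as [|k IH]; simpl; [rewrite vadd_0l; reflexivity|].
  rewrite IH, (Nat.add_comm m (S k)). reflexivity.
Qed.

Lemma cm_set_suppE (z : nat -> X) m r : cm_set z m r <-> cm_set_supp z m r.
Proof.
  split.
  - intros [a [k [H1 ->]]].
    pose (a' := fun n => if (m <=? n)%nat then if (n <? m + S k)%nat then a n else 0 else 0).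
    assert (Ha' : supported_in a' m (m + S k)).
    { intros n Hn. unfold a' in Hn.
      destruct (m <=? n)%nat eqn:E1; [destruct (n <? m + S k)%nat eqn:E2|]; try lra.
      apply Nat.leb_le in E1. apply Nat.ltb_lt in E2. lia. }
    assert (Hrestrict : forall {T} {add : T -> T -> T} {zero} (monoid : comm_monoid add zero) (g : nat -> R -> T),
      (forall n, g n 0 = zero) ->
      fsum add zero (fun i => g (i + m)%nat (a (i + m)%nat)) (S k) = fsum add zero (fun n => g n (a' n)) (m + S k)).
    { intros T add zero monoid g Hg. rewrite (fsum_shift monoid (fun n => g n (a n))). apply fsum_ext. intros n Hn.
      unfold a'. destruct (m <=? n)%nat; [| symmetry; apply Hg].
      replace (n <? m + S k)%nat with true by (symmetry; apply Nat.ltb_lt; lia). reflexivity. }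
    exists a', (m + S k)%nat. split; [exact Ha' | split].
    + rewrite <- H1, rsum_sum_f. symmetry. apply (Hrestrict _ _ _ R_comm_monoid (fun _ c => Rabs c)); intros; apply Rabs_R0.
    + rewrite vsum_lincomb. f_equal.
      apply (Hrestrict _ _ _ (X_comm_monoid X) (fun n c => vscal X c (z n))). intros; apply vscal_0l.
  - intros [a [K [Ha [H1 ->]]]].
    pose proof (supported_in_lt a m K Ha H1) as HK.
    assert (Hshift : forall {T} {add : T -> T -> T} {zero} (monoid : comm_monoid add zero) (g : nat -> R -> T),
      (forall n, g n 0 = zero) ->
      fsum add zero (fun n => g n (a n)) K = fsum add zero (fun i => g (i + m)%nat (a (i + m)%nat)) (S (K - m - 1))).
    { intros T add zero monoid g Hg. rewrite (fsum_shift monoid (fun n => g n (a n))).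
      replace (m + S (K - m - 1))%nat with K by lia. apply fsum_ext. intros n Hn.
      destruct (m <=? n)%nat eqn:E; [reflexivity|]. apply Nat.leb_gt in E.
      rewrite (supported_in_zero a m K n Ha) by lia. apply Hg. }
    exists a, (K - m - 1)%nat. split.
    + rewrite rsum_sum_f, <- H1. symmetry. apply (Hshift _ _ _ R_comm_monoid (fun _ c => Rabs c)); intros; apply Rabs_R0.
    + rewrite vsum_lincomb. f_equal.
      apply (Hshift _ _ _ (X_comm_monoid X) (fun n c => vscal X c (z n))). intros; apply vscal_0l.
Qed.

Lemma cm_set_supp_single (z : nat -> X) m : cm_set_supp z m (vnorm X (z m)).
Proof.
  pose (delta := fun n => if (n =? m)%nat then 1 else 0).
  assert (Hdelta : forall n, (n < S m)%nat -> n <> m -> delta n = 0).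
  { intros n _ Hn. unfold delta. apply Nat.eqb_neq in Hn. rewrite Hn. reflexivity. }
  exists delta, (S m). split; [| split].
  - intros n Hn. unfold delta in Hn. destruct (n =? m)%nat eqn:E; [apply Nat.eqb_eq in E; lia | lra].
  - rewrite (fsum_single R_comm_monoid _ (S m) m); [| lia | intros n Hn Hnm; rewrite Hdelta; auto using Rabs_R0].
    unfold delta. rewrite Nat.eqb_refl. apply Rabs_R1.
  - rewrite (fsum_single (X_comm_monoid X) _ (S m) m); [| lia | intros n Hn Hnm; rewrite Hdelta; auto using vscal_0l].
    unfold delta. rewrite Nat.eqb_refl, vscal_1. reflexivity.
Qed.

Lemma cm_exists (z : nat -> X) m : exists c, is_cm z m c.
Proof.
  apply glb_exists.
  - exists (vnorm X (z m)). apply cm_set_suppE, cm_set_supp_single.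
  - exists 0. intros r Hr. apply cm_set_suppE in Hr. destruct Hr as [a [K [_ [_ ->]]]]. apply vnorm_nonneg.
Qed.

Lemma cm_bounds (z : nat -> X) m c : is_cm z m c -> 0 <= c <= vnorm X (z m).
Proof.
  intros H. split.
  - apply (proj2 H). intros r Hr. apply cm_set_suppE in Hr. destruct Hr as [a [K [_ [_ ->]]]]. apply vnorm_nonneg.
  - apply (proj1 H). apply cm_set_suppE, cm_set_supp_single.
Qed.

Lemma cm_mono (z : nat -> X) m m' c c' : (m <= m')%nat -> is_cm z m c -> is_cm z m' c' -> c <= c'.
Proof.
  intros Hm H H'. apply (proj2 H'). intros r Hr. apply (proj1 H).
  apply cm_set_suppE in Hr. apply cm_set_suppE. destruct Hr as [a [K [Ha Hr]]].
  exists a, K. split; [| exact Hr]. intros n Hn. specialize (Ha n Hn). lia.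
Qed.

Lemma cm_set_supp_subseq (w z : nat -> X) th j m r :
  increasing_from j th -> (forall n, (j <= n)%nat -> w n = z (th n)) -> (j <= m)%nat ->
  cm_set_supp w m r -> cm_set_supp z (th m) r.
Proof.
  intros Hth Hw Hjm [a [K [Ha [H1 ->]]]].
  exists (pushforward th m K a), (th K). split; [exact (pushforward_supported th a j m K Hth Hjm Ha) |].
  split; [rewrite <- H1; exact (pushforward_abs_sum th a j m K Hth Hjm Ha) |].
  f_equal. symmetry. transitivity (lincomb X (fun n => a n) (fun n => z (th n)) K).
  - rewrite <- (fsum_pushforward th a j m K Hth Hjm Ha (X_comm_monoid X) (fun k c => vscal X c (z k)))
      by (intros; apply vscal_0l).
    apply fsum_ext. intros k _. apply xsum_scal_rsum.
  - apply fsum_ext. intros n _. destruct (Compare_dec.le_lt_dec m n) as [Hmn | Hnm].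
    + rewrite Hw by lia. reflexivity.
    + rewrite (supported_in_zero a m K n Ha) by lia. rewrite !vscal_0l. reflexivity.
Qed.

Lemma cm_subseq (w z : nat -> X) th j m c c' :
  increasing_from j th -> (forall n, (j <= n)%nat -> w n = z (th n)) -> (j <= m)%nat ->
  is_cm w m c -> is_cm z (th m) c' -> c' <= c.
Proof.
  intros Hth Hw Hjm H H'. apply (proj2 H). intros r Hr. apply (proj1 H').
  apply cm_set_suppE. apply cm_set_suppE in Hr. exact (cm_set_supp_subseq w z th j m r Hth Hw Hjm Hr).
Qed.

End CmSets.

Definition eventually_subseq {A : Type} (j : nat) (w z : nat -> A) : Prop :=
  exists th, increasing_from j th /\ (forall n, (j <= n)%nat -> (n <= th n)%nat) /\
    forall n, (j <= n)%nat -> w n = z (th n).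

Lemma eventually_subseq_map {A B : Type} (f : A -> B) j (w z : nat -> A) :
  eventually_subseq j w z -> eventually_subseq j (fun n => f (w n)) (fun n => f (z n)).
Proof. intros [th [H1 [H2 H3]]]. exists th. split; [exact H1 | split; [exact H2 |]]. intros n Hn. rewrite H3; auto. Qed.

Section CJ.
Variable X : BanachSpace.

Lemma cm_le_cJ (z : nat -> X) s m c : is_cJ z s -> is_cm z m c -> c <= s.
Proof. intros [H _] Hc. apply H. exists m. exact Hc. Qed.

Lemma cJ_le (z : nat -> X) s b : is_cJ z s -> (forall m c, is_cm z m c -> c <= b) -> s <= b.
Proof. intros [_ H] Hb. apply H. intros c [m Hm]. exact (Hb m c Hm). Qed.

Lemma cJ_nonneg (z : nat -> X) s : is_cJ z s -> 0 <= s.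
Proof.
  intros H. destruct (cm_exists X z 0) as [c Hc].
  pose proof (cm_bounds X z 0 c Hc). pose proof (cm_le_cJ z s 0 c H Hc). lra.
Qed.

Lemma cJ_le_bound (z : nat -> X) M s : (forall n, vnorm X (z n) <= M) -> is_cJ z s -> s <= M.
Proof.
  intros HM Hs. apply (cJ_le z s M Hs). intros m c Hc.
  pose proof (cm_bounds X z m c Hc). specialize (HM m). lra.
Qed.

Lemma cJ_exists (z : nat -> X) : bounded_seq z -> exists s, is_cJ z s.
Proof.
  intros [M HM]. destruct (completeness (fun c => exists m, is_cm z m c)) as [s Hs].
  - exists M. intros c [m Hm]. pose proof (cm_bounds X z m c Hm). specialize (HM m). lra.
  - destruct (cm_exists X z 0) as [c Hc]. exists c, 0%nat. exact Hc.
  - exists s. exact Hs.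
Qed.

Lemma bounded_seq_comp (z : nat -> X) (phi : nat -> nat) : bounded_seq z -> bounded_seq (fun n => z (phi n)).
Proof. intros [M HM]. exists M. intros n. apply HM. Qed.

Lemma cJ_eventually_subseq j (w z : nat -> X) s s' :
  eventually_subseq j w z -> is_cJ w s -> is_cJ z s' -> s' <= s.
Proof.
  intros [th [Hth [Hge Hwz]]] Hw Hz. apply (cJ_le z s' s Hz). intros m c Hc.
  destruct (cm_exists X z (th (m + j)%nat)) as [c1 Hc1].
  destruct (cm_exists X w (m + j)) as [c2 Hc2].
  pose proof (cm_mono X z m (th (m + j)%nat) c c1 ltac:(specialize (Hge (m + j)%nat ltac:(lia)); lia) Hc Hc1).
  pose proof (cm_subseq X w z th j (m + j) c2 c1 Hth Hwz ltac:(lia) Hc2 Hc1).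
  pose proof (cm_le_cJ w s _ c2 Hw Hc2). lra.
Qed.

Lemma tilde_cJ_exists (z : nat -> X) : bounded_seq z -> exists t, is_tilde_cJ z t.
Proof.
  intros Hz. destruct (cJ_exists z Hz) as [s Hs]. destruct Hz as [M HM].
  destruct (completeness (fun c => exists phi, strictly_increasing phi /\ is_cJ (fun k => z (phi k)) c))
    as [t Ht].
  - exists M. intros c [phi [_ Hc]]. apply (cJ_le_bound _ M c (fun n => HM (phi n)) Hc).
  - exists s, (fun n => n). split; [intros n; lia | exact Hs].
  - exists t. exact Ht.
Qed.

Lemma cJ_le_tilde_cJ (z : nat -> X) s t : is_cJ z s -> is_tilde_cJ z t -> s <= t.
Proof. intros Hs [Ht _]. apply Ht. exists (fun n => n). split; [intros n; lia | exact Hs]. Qed.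

Lemma tilde_cJ_eventually_subseq j (w z : nat -> X) T T' : bounded_seq z ->
  eventually_subseq j w z -> is_tilde_cJ w T -> is_tilde_cJ z T' -> T <= T'.
Proof.
  intros Hz [th [Hth [Hge Hwz]]] [_ HT] [HT' _]. apply HT.
  intros c [psi [Hpsi Hc]].
  pose (chi := fun n => if (n <? j)%nat then n else th (psi n)).
  assert (Hchi : strictly_increasing chi).
  { intros n. pose proof (strictly_increasing_ge psi Hpsi). unfold chi.
    destruct (Nat.ltb_spec n j); destruct (Nat.ltb_spec (S n) j); try lia.
    - specialize (Hge (psi (S n)) ltac:(specialize (H (S n)); lia)). specialize (H (S n)). lia.
    - apply (increasing_from_lt th j); [exact Hth | specialize (H n); lia | apply Hpsi]. }
  destruct (cJ_exists (fun n => z (chi n)) (bounded_seq_comp z chi Hz)) as [c' Hc'].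
  apply Rle_trans with c'.
  - apply (cJ_eventually_subseq j (fun n => z (chi n)) (fun n => w (psi n))); [| exact Hc' | exact Hc].
    exists (fun n => n). split; [intros n _; lia | split; [intros; lia |]].
    intros n Hn. unfold chi. replace (n <? j)%nat with false by (symmetry; apply Nat.ltb_ge; lia).
    rewrite Hwz; [reflexivity |]. pose proof (strictly_increasing_ge psi Hpsi n). lia.
  - apply HT'. exists chi. split; [exact Hchi | exact Hc'].
Qed.

End CJ.

Definition block_comb (b : nat -> nat -> R) (mu : nat -> R) (L n : nat) : R :=
  rsum (fun i => mu i * b i n) L.

Section Blocks.
Variable st : nat -> nat.
Variable b : nat -> nat -> R.
Hypothesis st_incr : strictly_increasing st.
Hypothesis b_supp : forall i, supported_in (b i) (st i) (st (S i)).

Lemma block_le i i' : (i < i')%nat -> (st (S i) <= st i')%nat.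
Proof.
  intros H. destruct (Nat.eq_dec (S i) i') as [<- | Hne]; [lia|].
  pose proof (increasing_from_lt st 0 (S i) i' (proj1 (strictly_increasing_from st) st_incr)). lia.
Qed.

Lemma blocks_disjoint n i i' : i <> i' -> b i n = 0 \/ b i' n = 0.
Proof.
  intros Hii'. destruct (Req_dec (b i n) 0) as [|E]; [left; assumption | right].
  destruct (Req_dec (b i' n) 0) as [|E']; [assumption | exfalso].
  pose proof (b_supp i n E). pose proof (b_supp i' n E').
  destruct (Nat.lt_total i i') as [Hl | [Hl | Hl]];
    [pose proof (block_le i i' Hl) | contradiction | pose proof (block_le i' i Hl)]; lia.
Qed.

Lemma fsum_block_extend {T : Type} {add : T -> T -> T} {zero : T} (monoid : comm_monoid add zero)
  (g : nat -> R -> T) i L : (forall n, g n 0 = zero) -> (i < L)%nat ->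
  fsum add zero (fun n => g n (b i n)) (st L) = fsum add zero (fun n => g n (b i n)) (st (S i)).
Proof. intros Hg HiL. apply (fsum_supported_extend monoid g (b i) (st i)); auto using block_le. Qed.

Lemma block_comb_supported mu L : supported_in (block_comb b mu L) (st 0) (st L).
Proof.
  intros n Hn. destruct (rsum_neq0 _ _ Hn) as [i [HiL Hi]].
  assert (Hbi : b i n <> 0) by (intros E; apply Hi; rewrite E; ring).
  pose proof (b_supp i n Hbi). pose proof (block_le i L HiL).
  pose proof (increasing_from_add st 0 i (proj1 (strictly_increasing_from st) st_incr)). simpl in *. lia.
Qed.

Lemma block_comb_abs_sum mu L : (forall i, 0 <= mu i) ->
  rsum (fun n => Rabs (block_comb b mu L n)) (st L) =
  rsum (fun i => mu i * rsum (fun n => Rabs (b i n)) (st (S i))) L.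
Proof.
  intros Hmu. transitivity (rsum (fun n => rsum (fun i => mu i * Rabs (b i n)) L) (st L)).
  - apply fsum_ext. intros n _. unfold block_comb. rewrite rsum_abs_disjoint.
    + apply fsum_ext. intros i _. rewrite Rabs_mult, (Rabs_pos_eq (mu i)) by apply Hmu. reflexivity.
    + intros i i' _ _ Hii'. destruct (blocks_disjoint n i i' Hii') as [E | E]; rewrite E; [left | right]; ring.
  - rewrite (fsum_swap R_comm_monoid). apply fsum_ext. intros i HiL.
    rewrite rsum_scal, <- (fsum_block_extend R_comm_monoid (fun _ c => mu i * Rabs c) i L);
      [reflexivity | intros; rewrite Rabs_R0; ring | exact HiL].
Qed.

Lemma block_comb_lincomb (X : BanachSpace) (z : nat -> X) mu L :
  lincomb X (block_comb b mu L) z (st L) =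
  xsum X (fun i => vscal X (mu i) (lincomb X (b i) z (st (S i)))) L.
Proof.
  transitivity (xsum X (fun n => xsum X (fun i => vscal X (mu i * b i n) (z n)) L) (st L)).
  - apply fsum_ext. intros n _. apply xsum_scal_rsum.
  - rewrite (fsum_swap (X_comm_monoid X)). apply fsum_ext. intros i HiL.
    rewrite xsum_scal, <- (fsum_block_extend (X_comm_monoid X) (fun n c => vscal X (mu i) (vscal X c (z n))) i L);
      [| intros; rewrite vscal_0l; apply vscal_0r | exact HiL].
    apply fsum_ext. intros n _. rewrite vscal_assoc. reflexivity.
Qed.

End Blocks.

Section Perturbation.
Variable X : BanachSpace.

Lemma weakly_Cauchy_comp (y : nat -> X) psi : weakly_Cauchy y -> strictly_increasing psi ->
  weakly_Cauchy (fun n => y (psi n)).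
Proof.
  intros Hy Hpsi f Hf eps Heps. destruct (Hy f Hf eps Heps) as [N HN]. exists N. intros n m Hn Hm.
  pose proof (strictly_increasing_ge psi Hpsi n). pose proof (strictly_increasing_ge psi Hpsi m).
  apply HN; lia.
Qed.

Lemma weakly_Cauchy_opp (y : nat -> X) : weakly_Cauchy y -> weakly_Cauchy (fun n => vopp X (y n)).
Proof.
  intros Hy f Hf eps Heps. destruct (Hy f Hf eps Heps) as [N HN]. exists N. intros n m Hn Hm.
  unfold Rdist. rewrite !(blf_opp X f Hf), <- Rabs_Ropp. replace (- (- f (y n) - - f (y m)))
    with (f (y n) - f (y m)) by ring. apply HN; assumption.
Qed.

Lemma zero_sum_blocks_weakly_null (y : nat -> X) (st : nat -> nat) (b : nat -> nat -> R) :
  weakly_Cauchy y -> (forall i, (i <= st i)%nat) ->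
  (forall i, supported_in (b i) (st i) (st (S i)) /\ rsum (fun n => Rabs (b i n)) (st (S i)) = 1 /\
             rsum (b i) (st (S i)) = 0) ->
  weakly_null X (fun i => lincomb X (b i) y (st (S i))).
Proof.
  intros Hy Hst Hb f Hf eps Heps. destruct (Hy f Hf eps Heps) as [N HN]. exists N. intros i Hi.
  destruct (Hb i) as [Hsupp [Habs Hzero]].
  (* the zero coefficient sum lets us subtract the constant [f (y N)] *)
  assert (E : f (lincomb X (b i) y (st (S i))) = rsum (fun n => b i n * (f (y n) - f (y N))) (st (S i))).
  { rewrite (blf_xsum X f Hf).
    transitivity (rsum (fun n => 1 * (b i n * (f (y n) - f (y N))) + f (y N) * b i n) (st (S i))).
    - apply fsum_ext. intros n _. rewrite (proj1 (proj2 Hf)). ring.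
    - rewrite rsum_lin, Hzero. ring. }
  rewrite E. eapply Rle_trans; [apply rsum_abs_le |].
  apply Rle_trans with (rsum (fun n => eps * Rabs (b i n)) (st (S i))).
  - apply rsum_le. intros n _. rewrite Rabs_mult, Rmult_comm.
    destruct (Req_dec (b i n) 0) as [E0 | E0]; [rewrite E0, Rabs_R0; lra |].
    pose proof (Hsupp n E0). pose proof (Hst i).
    apply Rmult_le_compat_r; [apply Rabs_pos |]. left. apply HN; lia.
  - rewrite <- rsum_scal, Habs. lra.
Qed.

Section SmallBlocks.
Variable w : nat -> X.
Variable s : R.
Hypothesis w_cJ : is_cJ w s.

Lemma small_combination_beyond N d : 0 < d -> exists a K, supported_in a N K /\
  rsum (fun n => Rabs (a n)) K = 1 /\ vnorm X (lincomb X a w K) < s + d.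
Proof.
  intros Hd. destruct (cm_exists X w N) as [c Hc]. pose proof (cm_le_cJ X w s N c w_cJ Hc).
  apply NNPP. intros Hno. assert (s + d <= c); [| lra].
  apply (proj2 Hc). intros r Hr. apply cm_set_suppE in Hr. destruct Hr as [a [K [Ha [H1 ->]]]].
  apply Rnot_lt_le. intros Hlt. exact (Hno (ex_intro _ a (ex_intro _ K (conj Ha (conj H1 Hlt))))).
Qed.

Lemma small_zero_sum_combination_beyond N d : 0 < d -> exists a K, supported_in a N K /\
  rsum (fun n => Rabs (a n)) K = 1 /\ rsum a K = 0 /\ vnorm X (lincomb X a w K) < s + d.
Proof.
  intros Hd.
  destruct (small_combination_beyond N d Hd) as [a1 [K1 [Hs1 [H11 H12]]]].
  destruct (small_combination_beyond K1 d Hd) as [a2 [K2 [Hs2 [H21 H22]]]].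
  pose proof (supported_in_lt a1 N K1 Hs1 H11). pose proof (supported_in_lt a2 K1 K2 Hs2 H21).
  set (s1 := rsum a1 K1). set (s2 := rsum a2 K2).
  destruct (Req_dec s1 0) as [E1 | E1]; [exists a1, K1; auto |].
  (* [s2 a1 - s1 a2], normalised, has zero coefficient sum *)
  set (D := Rabs s1 + Rabs s2).
  assert (HD : 0 < D) by (pose proof (Rabs_pos s2); pose proof (Rabs_pos_lt s1 E1); unfold D; lra).
  assert (Hdisj : forall n, a1 n = 0 \/ a2 n = 0).
  { intros n. destruct (Req_dec (a1 n) 0) as [|E]; [left; assumption | right].
    apply (supported_in_zero a2 K1 K2 n Hs2). pose proof (Hs1 n E). lia. }
  assert (Habs : forall c, Rabs (c / D) = Rabs c / D).
  { intros c. unfold Rdiv. rewrite Rabs_mult, Rabs_inv, (Rabs_pos_eq D); lra. }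
  assert (Hext : forall {T} {add : T -> T -> T} {zero} (monoid : comm_monoid add zero) (g : nat -> R -> T),
    (forall n, g n 0 = zero) -> fsum add zero (fun n => g n (a1 n)) K2 = fsum add zero (fun n => g n (a1 n)) K1)
    by (intros; apply (fsum_supported_extend monoid g a1 N K1); [assumption | exact Hs1 | lia]).
  exists (fun n => (s2 / D) * a1 n + (- s1 / D) * a2 n), K2. split; [| split; [| split]].
  - intros n Hn. destruct (Hdisj n) as [E | E]; rewrite E in Hn.
    + assert (Ha2 : a2 n <> 0) by (intros E'; rewrite E' in Hn; lra). pose proof (Hs2 n Ha2). lia.
    + assert (Ha1 : a1 n <> 0) by (intros E'; rewrite E' in Hn; lra). pose proof (Hs1 n Ha1). lia.
  - transitivity (rsum (fun n => (Rabs s2 / D) * Rabs (a1 n) + (Rabs s1 / D) * Rabs (a2 n)) K2).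
    + apply fsum_ext. intros n _. destruct (Hdisj n) as [E | E]; rewrite E, Rabs_R0.
      * replace (s2 / D * 0 + - s1 / D * a2 n) with (- s1 / D * a2 n) by ring.
        rewrite Rabs_mult, Habs, Rabs_Ropp. ring.
      * replace (s2 / D * a1 n + - s1 / D * 0) with (s2 / D * a1 n) by ring.
        rewrite Rabs_mult, Habs. ring.
    + rewrite rsum_lin, H21, (Hext _ _ _ R_comm_monoid (fun _ c => Rabs c)), H11 by (intros; apply Rabs_R0).
      unfold D in *. field. lra.
  - rewrite rsum_lin.
    replace (rsum a1 K2) with s1 by (symmetry; exact (Hext _ _ _ R_comm_monoid (fun _ c => c) (fun _ => eq_refl))).
    fold s2. field. lra.
  - rewrite lincomb_lin, (Hext _ _ _ (X_comm_monoid X) (fun n c => vscal X c (w n))) by (intros; apply vscal_0l).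
    apply vnorm_combination_lt; [| | lra | exact H22].
    + rewrite !Habs, Rabs_Ropp. unfold D in *. field. lra.
    + intros E. apply E1. apply (Rmult_eq_reg_r (/ D)); [| apply Rinv_neq_0_compat; lra].
      replace (s1 * / D) with (- (- s1 / D)) by (unfold Rdiv; ring). rewrite E. ring.
Qed.

Lemma small_zero_sum_blocks m d : 0 < d -> exists (st : nat -> nat) (b : nat -> nat -> R),
  st 0%nat = m /\ forall i, supported_in (b i) (st i) (st (S i)) /\
    rsum (fun n => Rabs (b i n)) (st (S i)) = 1 /\ rsum (b i) (st (S i)) = 0 /\
    vnorm X (lincomb X (b i) w (st (S i))) < s + d.
Proof.
  intros Hd.
  destruct (choice (fun N (p : (nat -> R) * nat) => supported_in (fst p) N (snd p) /\
    rsum (fun n => Rabs (fst p n)) (snd p) = 1 /\ rsum (fst p) (snd p) = 0 /\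
    vnorm X (lincomb X (fst p) w (snd p)) < s + d)) as [g Hg].
  { intros N. destruct (small_zero_sum_combination_beyond N d Hd) as [a [K H]]. exists (a, K). exact H. }
  exists (fun i => Nat.iter i (fun N => snd (g N)) m), (fun i => fst (g (Nat.iter i (fun N => snd (g N)) m))).
  split; [reflexivity |]. intros i. apply Hg.
Qed.

Lemma cm_add_weakly_Cauchy_le (y : nat -> X) m c :
  weakly_Cauchy y -> is_cm (seq_add w y) m c -> c <= s.
Proof.
  intros Hy Hc. apply Rnot_lt_le. intros Hlt.
  set (d := (c - s) / 3). assert (Hd : 0 < d) by (unfold d; lra).
  destruct (small_zero_sum_blocks m d Hd) as [st [b [Hst0 Hb]]].
  assert (Hsupp : forall i, supported_in (b i) (st i) (st (S i))) by (intros i; apply Hb).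
  assert (Hincr : strictly_increasing st).
  { intros i. destruct (Hb i) as [Hs [H1 _]]. exact (supported_in_lt _ _ _ Hs H1). }
  destruct (weakly_null_small_convex_combination X (fun i => lincomb X (b i) y (st (S i))) d Hd)
    as [mu [L [Hmu [Hmu1 Hsmall]]]].
  { apply zero_sum_blocks_weakly_null; [exact Hy | apply strictly_increasing_ge, Hincr |].
    intros i. destruct (Hb i) as [? [? [? _]]]. auto. }
  assert (Hcomb : cm_set_supp X (seq_add w y) m
                    (vnorm X (lincomb X (block_comb b mu L) (seq_add w y) (st L)))).
  { exists (block_comb b mu L), (st L). split; [rewrite <- Hst0; apply block_comb_supported; auto |].
    split; [| reflexivity].
    rewrite block_comb_abs_sum, <- Hmu1 by auto. apply fsum_ext. intros i _.
    destruct (Hb i) as [_ [-> _]]. ring. }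
  pose proof (proj1 Hc _ (proj2 (cm_set_suppE X _ _ _) Hcomb)) as Hle.
  rewrite block_comb_lincomb in Hle by auto.
  erewrite fsum_ext in Hle by (intros i _; rewrite lincomb_seq_add; apply vscal_distr_v).
  rewrite (fsum_add (X_comm_monoid X)) in Hle.
  pose proof (vnorm_triangle X (xsum X (fun i => vscal X (mu i) (lincomb X (b i) w (st (S i)))) L)
                               (lincomb X mu (fun i => lincomb X (b i) y (st (S i))) L)).
  assert (rsum (fun i => vnorm X (vscal X (mu i) (lincomb X (b i) w (st (S i))))) L <= s + d).
  { apply Rle_trans with (rsum (fun i => (s + d) * mu i) L).
    - apply rsum_le. intros i _. rewrite vnorm_scal, Rabs_pos_eq, Rmult_comm by apply Hmu.
      apply Rmult_le_compat_r; [apply Hmu |]. destruct (Hb i) as [_ [_ [_ ?]]]. lra.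
    - rewrite <- rsum_scal, Hmu1. lra. }
  pose proof (xsum_norm_le X (fun i => vscal X (mu i) (lincomb X (b i) w (st (S i)))) L).
  unfold d in *. lra.
Qed.

End SmallBlocks.

Lemma cJ_add_weakly_Cauchy (w y : nat -> X) s :
  is_cJ w s -> weakly_Cauchy y -> is_cJ (seq_add w y) s.
Proof.
  intros Hw Hy.
  destruct (completeness (fun c => exists m, is_cm (seq_add w y) m c)) as [s' Hs'].
  - exists s. intros c [m Hm]. exact (cm_add_weakly_Cauchy_le w s Hw y m c Hy Hm).
  - destruct (cm_exists X (seq_add w y) 0) as [c Hc]. exists c, 0%nat. exact Hc.
  - replace s with s'; [exact Hs' |]. apply Rle_antisym.
    + apply (cJ_le X _ s' s Hs'). intros m c Hm. exact (cm_add_weakly_Cauchy_le w s Hw y m c Hy Hm).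
    + apply (cJ_le X w s s' Hw). intros m c Hm.
      assert (Hw' : seq_add (seq_add w y) (fun n => vopp X (y n)) = w).
      { apply functional_extensionality. intros n. apply vadd_addKr. }
      rewrite <- Hw' in Hm.
      exact (cm_add_weakly_Cauchy_le _ s' Hs' _ m c (weakly_Cauchy_opp y Hy) Hm).
Qed.
End Perturbation.

Fixpoint compose_from (psi : nat -> nat -> nat) (k l : nat) : nat -> nat :=
  match l with
  | O => fun n => n
  | S l' => fun n => compose_from psi k l' (psi (k + l')%nat n)
  end.

Section Diagonal.
Variables theta psi : nat -> nat -> nat.
Hypothesis psi_incr : forall k, strictly_increasing (psi k).
Hypothesis theta_S : forall k n, theta (S k) n = theta k (psi k n).

Lemma compose_from_incr k l : strictly_increasing (compose_from psi k l).
Proof.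
  induction l as [|l IH]; simpl; [intros n; lia |].
  apply (strictly_increasing_comp _ _ IH (psi_incr _)).
Qed.

Lemma theta_compose_from k l n : theta (k + l)%nat n = theta k (compose_from psi k l n).
Proof.
  revert n. induction l as [|l IH]; intros n; simpl; [rewrite Nat.add_0_r; reflexivity |].
  rewrite Nat.add_succ_r, theta_S, IH. reflexivity.
Qed.

Lemma diagonal_incr : strictly_increasing (theta 0) -> strictly_increasing (fun n => theta n n).
Proof.
  intros H0.
  assert (Hk : forall k, strictly_increasing (theta k)).
  { intros k n. change (theta (0 + k)%nat n < theta (0 + k)%nat (S n))%nat.
    rewrite !theta_compose_from. exact (strictly_increasing_comp _ _ H0 (compose_from_incr 0 k) n). }
  intros n. rewrite theta_S. apply (increasing_from_lt (theta n) 0);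
    [apply strictly_increasing_from, Hk | lia | pose proof (strictly_increasing_ge _ (psi_incr n) (S n)); lia].
Qed.

Lemma diagonal_eventually_subseq k : eventually_subseq k (fun n => theta n n) (theta k).
Proof.
  exists (fun n => compose_from psi k (n - k) n). split; [| split].
  - intros n Hn. replace (S n - k)%nat with (S (n - k)) by lia. simpl.
    replace (k + (n - k))%nat with n by lia.
    apply (increasing_from_lt _ 0); [apply strictly_increasing_from, compose_from_incr | lia |].
    pose proof (strictly_increasing_ge _ (psi_incr n) (S n)). lia.
  - intros n _. apply strictly_increasing_ge, compose_from_incr.
  - intros n Hn. rewrite <- theta_compose_from. f_equal. lia.
Qed.

End Diagonal.

Fixpoint refinements (g : nat -> (nat -> nat) -> (nat -> nat)) (k : nat) : nat -> nat :=
  match k with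
  | O => fun n => n
  | S k' => fun n => refinements g k' (g k' (refinements g k') n)
  end.

Lemma is_lub_ext (E1 E2 : R -> Prop) a : (forall c, E1 c <-> E2 c) -> is_lub E1 a -> is_lub E2 a.
Proof.
  intros H [H1 H2]. split.
  - intros c Hc. apply H1, H, Hc.
  - intros b Hb. apply H2. intros c Hc. apply Hb, H, Hc.
Qed.

Lemma le_of_forall_lt_sub_inv T a d : 0 < d -> (forall k, T - d / INR (S k) < a) -> T <= a.
Proof.
  intros Hd H. apply Rnot_lt_le. intros Hlt.
  destruct (archimed_cor1 ((T - a) / d)) as [N [HN HN0]]; [apply Rdiv_lt_0_compat; lra |].
  specialize (H N). rewrite S_INR in H.
  assert (HINR : 0 < INR N) by (apply lt_0_INR; exact HN0).
  assert (d / (INR N + 1) < d / INR N) by (apply Rmult_lt_compat_l; [exact Hd | apply Rinv_lt_contravar; nra]).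
  assert (d / INR N < T - a).
  { apply (Rmult_lt_reg_r (/ d)); [apply Rinv_0_lt_compat; exact Hd |].
    replace (d / INR N * / d) with (/ INR N) by (field; lra).
    replace ((T - a) * / d) with ((T - a) / d) by reflexivity. exact HN. }
  lra.
Qed.

Section StableSubsequence.
Variable X : BanachSpace.

Lemma tilde_cJ_add_weakly_Cauchy (w y : nat -> X) t : bounded_seq w -> weakly_Cauchy y ->
  is_tilde_cJ w t -> is_tilde_cJ (seq_add w y) t.
Proof.
  intros Hw Hy. apply is_lub_ext. intros c. split; intros [psi [Hpsi Hc]]; exists psi; split; auto.
  - exact (cJ_add_weakly_Cauchy X _ _ c Hc (weakly_Cauchy_comp X y psi Hy Hpsi)).
  - destruct (cJ_exists X (fun k => w (psi k)) (bounded_seq_comp X w psi Hw)) as [c' Hc'].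
    replace c with c'; [exact Hc' |]. apply (is_lub_u (fun c => exists m, is_cm (seq_add (fun k => w (psi k)) (fun k => y (psi k))) m c)).
    + exact (cJ_add_weakly_Cauchy X _ _ c' Hc' (weakly_Cauchy_comp X y psi Hy Hpsi)).
    + exact Hc.
Qed.

Lemma exists_subseq_near_tilde_cJ (z : nat -> X) e : bounded_seq z -> 0 < e ->
  exists psi, strictly_increasing psi /\
    forall T c, is_tilde_cJ z T -> is_cJ (fun n => z (psi n)) c -> T - e < c.
Proof.
  intros Hz He. destruct (tilde_cJ_exists X z Hz) as [T HT].
  assert (exists psi c, strictly_increasing psi /\ is_cJ (fun n => z (psi n)) c /\ T - e < c)
    as [psi [c [Hpsi [Hc Hlt]]]].
  { apply NNPP. intros Hno. assert (T <= T - e); [| lra].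
    apply (proj2 HT). intros c [psi [Hpsi Hc]]. apply Rnot_lt_le. intros Hlt.
    apply Hno. exists psi, c. auto. }
  exists psi. split; [exact Hpsi |]. intros T' c' HT' Hc'.
  rewrite (is_lub_u _ _ _ HT' HT), (is_lub_u _ _ _ Hc' Hc). exact Hlt.
Qed.

Lemma exists_cJ_stable_subseq (x : nat -> X) d : bounded_seq x -> 0 < d ->
  exists phi a, strictly_increasing phi /\ is_cJ (fun n => x (phi n)) a /\
    is_tilde_cJ (fun n => x (phi n)) a /\ forall t, is_tilde_cJ x t -> t - d < a.
Proof.
  intros Hx Hd.
  set (e := fun k => d / INR (S k)).
  destruct (choice (fun (kth : nat * (nat -> nat)) psi => strictly_increasing psi /\
      forall T c, is_tilde_cJ (fun n => x (snd kth n)) T ->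
        is_cJ (fun n => x (snd kth (psi n))) c -> T - e (fst kth) < c)) as [g Hg].
  { intros [k th]. apply exists_subseq_near_tilde_cJ; [apply bounded_seq_comp, Hx |].
    apply Rdiv_lt_0_compat; [exact Hd | apply lt_0_INR; lia]. }
  (* [theta (S k)] refines [theta k] so that its c_J is within [e k] of tilde c_J of [theta k] *)
  set (gk := fun k th => g (k, th)).
  set (theta := refinements gk).
  assert (Hpsi : forall k, strictly_increasing (gk k (theta k))) by (intros k; apply (Hg (k, theta k))).
  assert (Htheta : forall k n, theta (S k) n = theta k (gk k (theta k) n)) by reflexivity.
  set (phi := fun n => theta n n).
  assert (Hphi : strictly_increasing phi).
  { apply (diagonal_incr theta (fun k => gk k (theta k)) Hpsi Htheta). intros n. unfold theta. simpl. lia. }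
  assert (Hsub : forall k, eventually_subseq k (fun n => x (phi n)) (fun n => x (theta k n))).
  { intros k. apply eventually_subseq_map, (diagonal_eventually_subseq theta (fun k => gk k (theta k))); auto. }
  assert (Hbnd : forall th, bounded_seq (fun n => x (th n))) by (intros th; apply bounded_seq_comp, Hx).
  destruct (cJ_exists X _ (Hbnd phi)) as [a Ha].
  destruct (tilde_cJ_exists X _ (Hbnd phi)) as [T HT].
  assert (Hnear : forall k Tk, is_tilde_cJ (fun n => x (theta k n)) Tk -> Tk - e k < a).
  { intros k Tk HTk. destruct (cJ_exists X _ (Hbnd (theta (S k)))) as [c Hc].
    pose proof (proj2 (Hg (k, theta k)) Tk c HTk Hc).
    pose proof (cJ_eventually_subseq X (S k) _ _ a c (Hsub (S k)) Ha Hc). cbn [fst] in *. lra. }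
  assert (HTa : T <= a).
  { apply (le_of_forall_lt_sub_inv T a d Hd). intros k.
    destruct (tilde_cJ_exists X _ (Hbnd (theta k))) as [Tk HTk].
    pose proof (tilde_cJ_eventually_subseq X k _ _ T Tk (Hbnd (theta k)) (Hsub k) HT HTk).
    pose proof (Hnear k Tk HTk). unfold e in *. lra. }
  exists phi, a. split; [exact Hphi | split; [exact Ha | split]].
  - replace a with T; [exact HT |]. apply Rle_antisym; [exact HTa | exact (cJ_le_tilde_cJ X _ a T Ha HT)].
  - intros t Ht. pose proof (Hnear 0%nat t Ht). unfold e in *. simpl in *.
    replace (d / 1) with d in * by field. lra.
Qed.

End StableSubsequence.

Lemma exists_cJ_stable_subseq_ratio (X : BanachSpace) (x : nat -> X) eps : bounded_seq x -> 0 < eps ->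
  exists phi a, strictly_increasing phi /\ is_cJ (fun n => x (phi n)) a /\
    is_tilde_cJ (fun n => x (phi n)) a /\ forall t, is_tilde_cJ x t -> (1 - eps) * t <= a.
Proof.
  intros Hx Heps. destruct (tilde_cJ_exists X x Hx) as [t Ht].
  destruct (cJ_exists X x Hx) as [s Hs].
  pose proof (cJ_nonneg X x s Hs). pose proof (cJ_le_tilde_cJ X x s t Hs Ht).
  destruct (Req_dec t 0) as [Ht0 | Ht0];
    [destruct (exists_cJ_stable_subseq X x 1 Hx Rlt_0_1) as [phi [a [Hphi [Ha [HTa _]]]]]
    | destruct (exists_cJ_stable_subseq X x (eps * t) Hx ltac:(nra)) as [phi [a [Hphi [Ha [HTa Hnear]]]]]];
    exists phi, a; (split; [exact Hphi | split; [exact Ha | split; [exact HTa |]]]);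
    intros t' Ht'; rewrite (is_lub_u _ _ _ Ht' Ht).
  - pose proof (cJ_nonneg X _ a Ha). rewrite Ht0. lra.
  - pose proof (Hnear t Ht). lra.
Qed.

Theorem lemma5p3 (X : BanachSpace) (x y : nat -> X)
  (hx : bounded_seq x) (hy : weakly_Cauchy y) (eps : R) (heps : 0 < eps < 1) :
  exists phi : nat -> nat, strictly_increasing phi /\
    cJ_stable (fun k => x (phi k)) /\
    cJ_stable (seq_add (fun k => x (phi k)) (fun k => y (phi k))) /\
    (exists t a b : R,
       is_tilde_cJ x t /\
       is_cJ (fun k => x (phi k)) a /\
       is_cJ (seq_add (fun k => x (phi k)) (fun k => y (phi k))) b /\
       (1 - eps) * t <= a /\ a <= t /\ b = a).
Proof.
  destruct (exists_cJ_stable_subseq_ratio X x eps hx (proj1 heps)) as [phi [a [Hphi [Ha [HTa Hratio]]]]].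
  destruct (tilde_cJ_exists X x hx) as [t Ht].
  pose proof (weakly_Cauchy_comp X y phi hy Hphi) as Hyphi.
  pose proof (cJ_add_weakly_Cauchy X _ _ a Ha Hyphi) as Hab.
  exists phi. split; [exact Hphi | split; [| split]].
  - exists a. split; [exact Ha | exact HTa].
  - exists a. split; [exact Hab |].
    apply tilde_cJ_add_weakly_Cauchy; [apply bounded_seq_comp, hx | exact Hyphi | exact HTa].
  - exists t, a, a. split; [exact Ht | split; [exact Ha | split; [exact Hab |]]].
    split; [exact (Hratio t Ht) | split; [| reflexivity]].
    apply (proj1 Ht). exists phi. split; [exact Hphi | exact Ha].
Qed.
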